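(* Let $P$ be a poset with least element $0$. Then the metric dimension $\dim_M(G(P))$ of the zero-divisor graph $G(P)$ is finite if and only if $G(P)$ is a finite graph.
   Context: For a poset $P$ with $0$ and $A\subseteq P$, $A^{\ell}=\{b\in P: b\le a \text{ for all } a\in A\}$. An element $a\in P$ is a zero-divisor if there is $b\in P\setminus\{0\}$ with $\{a,b\}^{\ell}=\{0\}$; $Z(P)$ is the set of zero-divisors and $Z^*(P)=Z(P)\setminus\{0\}$. The zero-divisor graph $G(P)$ is the simple graph with vertex set $Z^*(P)$ in which distinct $a,b$ are adjacent iff $\{a,b\}^{\ell}=\{0\}$. (It is known that $G(P)$ is connected of diameter at most $3$.) For a connected graph $G$ and an ordered set $S=\{v_1,\dots,v_k\}\subseteq V(G)$, the representation of $v$ is $D(v|S)=(d(v,v_1),\dots,d(v,v_k))$; $S$ is a resolving set if $D(u|S)=D(v|S)$ for $u,v\in V(G)\setminus S$ implies $u=v$. The metric dimension $\dim_M(G)$ is the minimum cardinality of a resolving set. *)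

From HB Require Import structures.
From mathcomp Require Import all_boot all_order.
From mathcomp Require Import boolp classical_sets cardinality.
Set Implicit Arguments. Unset Strict Implicit. Unset Printing Implicit Defensive.
Import Order.Theory.
Local Open Scope order_scope.
Local Open Scope classical_set_scope.

Inductive walk {T : Type} (V : set T) (adj : T -> T -> Prop) : nat -> T -> T -> Prop :=
| walk0 u : V u -> walk V adj 0 u u
| walkS n u w v : V u -> adj u w -> walk V adj n w v -> walk V adj n.+1 u v.

Definition gdist {T : Type} (V : set T) (adj : T -> T -> Prop) (u v : T) (n : nat) :=
  walk V adj n u v /\ forall m, walk V adj m u v -> (n <= m)%N.

Definition resolving {T : Type} (V : set T) (adj : T -> T -> Prop) (S : set T) :=
  S `<=` V /\
  forall u v, V u -> V v -> ~ S u -> ~ S v ->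
    (forall s, S s -> forall n, gdist V adj u s n <-> gdist V adj v s n) -> u = v.

Definition finite_metric_dim {T : Type} (V : set T) (adj : T -> T -> Prop) :=
  exists S : set T, resolving V adj S /\ finite_set S.

Definition lower_zero {d : Order.disp_t} {P : bPOrderType d} (a b : P) : Prop :=
  forall x : P, x <= a -> x <= b -> x = \bot.

Definition zero_divisor {d : Order.disp_t} {P : bPOrderType d} (a : P) : Prop :=
  exists b : P, b <> \bot /\ lower_zero a b.

Definition Zstar {d : Order.disp_t} (P : bPOrderType d) : set P :=
  [set a | zero_divisor a /\ a <> \bot].

Definition zd_adj {d : Order.disp_t} (P : bPOrderType d) (a b : P) : Prop :=
  a <> b /\ lower_zero a b.

Arguments Zstar {d} P _.
Arguments zd_adj {d} P _ _.

(* A graph of diameter at most k in which a finite set S resolves the vertices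
   has at most |S| + (k+1)^|S| vertices: a vertex outside S is determined by its
   vector of distances to S, whose entries lie in {0,...,k}.  The zero-divisor
   graph of a poset has diameter at most 3: two vertices u, s with nonzero
   annihilators a, b are joined by u - a - s if {a,s}^l = {0}, and otherwise by
   u - x - b - s for a nonzero common lower bound x of a and s.  Conversely the
   whole vertex set is always resolving. *)
From HB Require Import structures.
From mathcomp Require Import all_boot all_order.
From mathcomp Require Import boolp classical_sets cardinality.
Set Implicit Arguments. Unset Strict Implicit. Unset Printing Implicit Defensive.
Import Order.Theory.
Local Open Scope order_scope.
Local Open Scope classical_set_scope.

Lemma finite_set_inj_finType (T : Type) (U : finType) (A : set T) (f : T -> U) :
  {in A &, injective f} -> finite_set A.
Proof. by move=> /inj_card_eq/eq_finite_set <-; exact: finite_finset. Qed.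

Lemma resolving_vertices (T : Type) (V : set T) (adj : T -> T -> Prop) :
  resolving V adj V.
Proof. by split=> // u v _ _ []. Qed.

Lemma finite_metric_dim_finite (T : Type) (V : set T) (adj : T -> T -> Prop) :
  finite_set V -> finite_metric_dim V adj.
Proof. by exists V; split; [exact: resolving_vertices|]. Qed.

Section BoundedDiameter.
Variables (T : eqType) (V : set T) (adj : T -> T -> Prop) (k : nat).
Hypothesis walk_le : forall u v, V u -> V v -> exists2 m, (m <= k)%N & walk V adj m u v.

Lemma gdist_le u v n : V u -> V v -> gdist V adj u v n -> (n <= k)%N.
Proof.
by move=> Vu Vv [_ nmin]; have [m mk /nmin nm] := walk_le Vu Vv; exact: leq_trans nm mk.
Qed.

Lemma gdist_iff_bounded u v s : V u -> V v -> V s ->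
  (forall n : 'I_k.+1, gdist V adj u s n <-> gdist V adj v s n) ->
  forall n, gdist V adj u s n <-> gdist V adj v s n.
Proof.
move=> Vu Vv Vs eq_k n; have [nk|kn] := ltnP n k.+1; first by have := eq_k (Ordinal nk).
by split=> /gdist_le => [/(_ Vu Vs)|/(_ Vv Vs)]; rewrite leqNgt kn.
Qed.

Lemma finite_resolving_finite S :
  resolving V adj S -> finite_set S -> finite_set V.
Proof.
move=> [SV Sres] /finite_seqP[l Sl].
pose profile u : {ffun 'I_(size l) -> {ffun 'I_k.+1 -> bool}} :=
  [ffun i => [ffun n : 'I_k.+1 => `[< gdist V adj u (tnth (in_tuple l) i) n >]]].
have profile_inj : {in V `\` S &, injective profile}.
  move=> u v /set_mem[Vu Su] /set_mem[Vv Sv] eq_uv.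
  apply: Sres => // s Ss; have /tnthP[i si] : s \in in_tuple l by rewrite Sl in Ss.
  apply: gdist_iff_bounded => // [|n]; first exact: SV.
  rewrite si; move/ffunP/(_ i): eq_uv; rewrite /profile !ffunE => /ffunP/(_ n).
  by rewrite !ffunE; exact: asbool_eq_equiv.
rewrite -(setDUK SV) finite_setU; split; last exact: finite_set_inj_finType profile_inj.
by rewrite Sl; exact: finite_seq.
Qed.

End BoundedDiameter.

Section ZeroDivisorGraph.
Variables (d : Order.disp_t) (P : bPOrderType d).

Lemma lower_zero_sym (a b : P) : lower_zero a b -> lower_zero b a.
Proof. by move=> ab x xb xa; apply: ab. Qed.

Lemma lower_zero_le (a a' b : P) : a' <= a -> lower_zero a b -> lower_zero a' b.
Proof. by move=> a'a ab x xa' xb; apply: ab => //; exact: le_trans a'a. Qed.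

Lemma lower_zero_neq (a b : P) : a <> \bot -> lower_zero a b -> a <> b.
Proof. by move=> a0 ab eab; subst b; apply: a0; apply: ab. Qed.

Lemma Zstar_lower_zero (a b : P) :
  a <> \bot -> b <> \bot -> lower_zero a b -> Zstar P a.
Proof. by move=> a0 b0 ab; split=> //; exists b. Qed.

Lemma zd_adj_lower_zero (a b : P) : a <> \bot -> lower_zero a b -> zd_adj P a b.
Proof. by move=> a0 ab; split=> //; exact: lower_zero_neq. Qed.

Lemma zd_walk_le3 (u s : P) : Zstar P u -> Zstar P s ->
  exists2 m, (m <= 3)%N & walk (Zstar P) (zd_adj P) m u s.
Proof.
move=> Zu Zs; have [[a [a0 ua]] u0] := Zu; have [[b [b0 sb]] s0] := Zs.
have au := lower_zero_sym ua; have bs := lower_zero_sym sb.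
have Za := Zstar_lower_zero a0 u0 au; have Zb := Zstar_lower_zero b0 s0 bs.
have walk_s := walk0 (zd_adj P) Zs.
have [as_|] := pselect (lower_zero a s).
  exists 2%N => //; apply: walkS Zu (zd_adj_lower_zero u0 ua) _.
  exact: walkS Za (zd_adj_lower_zero a0 as_) walk_s.
rewrite /lower_zero -existsNE => -[x /not_implyP[xa /not_implyP[xs x0]]].
have xu : lower_zero x u := lower_zero_le xa au.
have xb : lower_zero x b := lower_zero_le xs sb.
have Zx := Zstar_lower_zero x0 u0 xu.
exists 3%N => //; apply: walkS Zu (zd_adj_lower_zero u0 (lower_zero_sym xu)) _.
apply: walkS Zx (zd_adj_lower_zero x0 xb) _.
exact: walkS Zb (zd_adj_lower_zero b0 bs) walk_s.
Qed.

End ZeroDivisorGraph.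

Theorem mainTheorem1 (d : Order.disp_t) (P : bPOrderType d) :
  finite_metric_dim (Zstar P) (zd_adj P) <-> finite_set (Zstar P).
Proof.
split; last exact: finite_metric_dim_finite.
by move=> [S [Sres Sfin]]; apply: (finite_resolving_finite (@zd_walk_le3 d P) Sres).
Qed.
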